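(* Let $\phi:\mathbb{N}_0\to\mathbb{N}_0$ satisfy $\phi(0)=0$ and $\phi(x)\neq x$ for all $x\in\mathbb{N}$, and let $n\ge 2$. Assume the local function $\phi_n$ has no cycle. Then: (1) $M_n(\phi)$ is nilpotent of degree at most $n$. (2) For every $k\ge1$ the power $M_n(\phi)^k$ is a binary ($\{0,1\}$-valued) matrix, $\#M_n(\phi)^k\le n-k$ for $1\le k\le n$, and $M_n(\phi)^k\cap M_n(\phi)^l=0$ for all $k\ne l$, $k,l\ge1$. (3) $\widehat{M}_n(\phi)$ is invertible and $\det\widehat{M}_n(\phi)=1$. (4) $\widehat{M}_n(\phi)^{-1}$ is a binary matrix with $\widehat{M}_n(\phi)^{-1}=I+M_n(\phi)+\cdots+M_n(\phi)^{n-1}$ and \[ \#\widehat{M}_n(\phi)^{-1}=n+\sum_{k=1}^{n-1}\#M_n(\phi)^k\le\binom{n+1}{2}. \]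
   Context: $\mathbb{N}=\{1,2,\dots\}$, $\mathbb{N}_0=\mathbb{N}\cup\{0\}$, $D_n=\{1,\dots,n\}$, $D_{n,0}=D_n\cup\{0\}$. The local function $\phi_n:D_{n,0}\to D_{n,0}$ is $\phi_n(x)=\phi(x)$ if $x\in D_n$ and $\phi(x)\in D_n$, and $\phi_n(x)=0$ otherwise. ''$\phi_n$ has no cycle'' means there are no $m\ge2$ and $x\in D_n$ with $\phi_n^m(x)=x$. For $1\le i\le n$, $\mathbf{e}_i$ is the $i$-th unit vector in $\mathbb{Z}^n$ and $\mathbf{e}_0$ is the zero vector. $M_n(\phi)$ is the $n\times n$ matrix whose $j$-th column is $\mathbf{e}_{\phi_n(j)}$, and $\widehat{M}_n(\phi)=I-M_n(\phi)$. For an $n\times n$ matrix $A$, $\#A$ is the number of nonzero entries of $A$ ($\#A^k$ means $\#(A^k)$). For $n\times n$ matrices $A,B$, $A\cap B$ denotes the number of index pairs $(i,j)$ with $A_{ij}B_{ij}\ne0$. A matrix $A$ is nilpotent of degree $k$ if $A^k=0$ and $A^{k-1}\neq 0$. *)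

From HB Require Import structures.
From mathcomp Require Import all_boot all_order all_algebra.
Set Implicit Arguments. Unset Strict Implicit. Unset Printing Implicit Defensive.
Import Order.TTheory GRing.Theory Num.Theory.
Local Open Scope ring_scope.

Definition local_fun (phi : nat -> nat) (n : nat) (x : nat) : nat :=
  if ((1 <= x <= n) && (1 <= phi x <= n))%N then phi x else 0%N.

Definition no_cycle (phi : nat -> nat) (n : nat) : Prop :=
  ~ (exists m x : nat, (2 <= m)%N /\ (1 <= x <= n)%N /\ iter m (local_fun phi n) x = x).

(* M_n(phi): column j (1-based) is e_{phi_n(j)} (e_0 = 0).
   With 0-based ordinals, entry (i,j) is 1 iff phi_n(j+1) = i+1. *)
Definition Mphi (phi : nat -> nat) (n : nat) : 'M[int]_n :=
  \matrix_(i < n, j < n) ((local_fun phi n j.+1 == i.+1)%N)%:R.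

Definition Mhat (phi : nat -> nat) (n : nat) : 'M[int]_n := 1%:M - Mphi phi n.

Definition nnz {R : nzRingType} {n : nat} (A : 'M[R]_n) : nat :=
  #|[set ij : 'I_n * 'I_n | A ij.1 ij.2 != 0]|.

Definition capnz {R : nzRingType} {n : nat} (A B : 'M[R]_n) : nat :=
  #|[set ij : 'I_n * 'I_n | (A ij.1 ij.2 != 0) && (B ij.1 ij.2 != 0)]|.

Definition binary_mx {R : nzRingType} {n : nat} (A : 'M[R]_n) : Prop :=
  forall i j, A i j = 0 \/ A i j = 1.

Definition nilpotent_of_degree {R : nzRingType} {n : nat} (A : 'M[R]_n) (k : nat) : Prop :=
  A ^+ k = 0 /\ A ^+ k.-1 <> 0.

(* The hypotheses make [phi_n] a partial self-map of [{1, ..., n}] without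
   periodic points, so every orbit visits distinct points until it falls into
   [0], which happens within [n] steps.  Hence [M^k] is the matrix of [phi_n^k],
   the powers of [M] have pairwise disjoint supports and [M^n = 0].  The set
   where [phi_n^k] is defined strictly shrinks with [k] until it is empty, which
   gives [#M^k <= n - k].  Finally [I - M] is unipotent: its inverse is the
   geometric series [I + M + ... + M^(n-1)] and its determinant is [1]. *)

From mathcomp Require Import all_boot all_order all_algebra.
From Stdlib Require Import Lia.
From mathcomp Require Import zify.

Set Implicit Arguments. Unset Strict Implicit. Unset Printing Implicit Defensive.
Import GRing.Theory.
Local Open Scope ring_scope.

Lemma mulmx_1B_sum_exp (R : pzRingType) n (A : 'M[R]_n) m :
  A ^+ m = 0 -> (1%:M - A) *m \sum_(k < m) A ^+ k = 1%:M.
Proof. by move=> Am0; rewrite mulmxE -opprB mulNr -subrX1 Am0 sub0r opprK. Qed.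

Lemma invmx_1B_nilpotent (R : comUnitRingType) n (A : 'M[R]_n) m :
  A ^+ m = 0 -> (1%:M - A \in unitmx) /\ invmx (1%:M - A) = \sum_(k < m) A ^+ k.
Proof.
move=> /mulmx_1B_sum_exp inv1B; have [unit1B _] := mulmx1_unit inv1B.
by split=> //; rewrite -[RHS](mulKmx unit1B) inv1B mulmx1.
Qed.

(* [1 - X A] is invertible in the polynomial matrices, so its determinant is a
   unit of [{poly R}], hence constant; evaluating at [0] and [1] compares [1]
   with [\det (1 - A)]. *)
Lemma det_1B_nilpotent (R : idomainType) n (A : 'M[R]_n) m :
  A ^+ m = 0 -> \det (1%:M - A) = 1.
Proof.
case: n A => [|n] A Am0; first by rewrite det_mx00.
set B := 'X *: map_mx polyC A.
have Bm0 : B ^+ m = 0 by rewrite exprZn -rmorphXn Am0 rmorph0 scaler0.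
have /mulmx1_unit[unit1B _] := mulmx_1B_sum_exp Bm0.
have /andP[/eqP size_det _] : \det (1%:M - B) \is a GRing.unit.
  by rewrite -unitmxE.
have constB : \det (1%:M - B) = ((\det (1%:M - B))`_0)%:P.
  by apply: size1_polyC; rewrite size_det.
have evalE x : \det (1%:M - x *: A) = (\det (1%:M - B)).[x].
  rewrite -horner_evalE -det_map_mx; congr (\det _); apply/matrixP=> i j.
  by rewrite !mxE /= horner_evalE !(hornerE, hornerMn).
have := evalE 0; rewrite scale0r subr0 det1 constB hornerC => det0.
by rewrite -[A]scale1r evalE constB hornerC det0.
Qed.

Lemma nilpotent_degree_exists (R : nzRingType) n (A : 'M[R]_n) m :
  (0 < n)%N -> A ^+ m = 0 -> exists k, (1 <= k <= m)%N /\ nilpotent_of_degree A k.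
Proof.
move=> n_gt0 Am0; have exA : exists k, A ^+ k == 0 by exists m; apply/eqP.
have [k /eqP Ak0 min_k] := ex_minnP exA.
have k_gt0 : (0 < k)%N.
  case: k Ak0 {min_k} => // /matrixP /(_ (Ordinal n_gt0) (Ordinal n_gt0)) /eqP.
  by rewrite expr0 !mxE eqxx oner_eq0.
exists k; split; first by rewrite k_gt0 min_k ?Am0.
split=> // Akpred0; have := min_k k.-1; rewrite Akpred0 eqxx => /(_ isT).
by rewrite leqNgt ltn_predL k_gt0.
Qed.

Section DisjointSupports.

Variables (R : nzRingType) (n : nat).

Lemma nnzE (A : 'M[R]_n) : nnz A = (\sum_i \sum_j (A i j != 0%R))%N.
Proof.
rewrite pair_bigA /nnz -sum1_card big_mkcond /=.
by apply: eq_bigr => ij _; rewrite inE; case: (_ != 0).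
Qed.

Lemma capnz_eq0P (A B : 'M[R]_n) :
  reflect (forall i j, A i j != 0 -> B i j = 0) (capnz A B == 0%N).
Proof.
rewrite cards_eq0; apply: (iffP eqP) => [AB0 i j Aij | AB0].
  by move/setP: AB0 => /(_ (i, j)); rewrite !inE /= Aij => /negbFE/eqP.
apply/setP=> -[i j]; rewrite !inE /=.
by have [//|Aij] := eqVneq (A i j) 0; rewrite AB0 ?eqxx.
Qed.

Variables (I : finType) (A : I -> 'M[R]_n).
Hypothesis disjA : forall k l, k != l -> capnz (A k) (A l) = 0%N.

Lemma disjoint_support_entry k l : k != l ->
  forall i j, A k i j != 0 -> A l i j = 0.
Proof. by move=> neq_kl; apply/capnz_eq0P/eqP/disjA. Qed.

Lemma summx_disjointE i j k : A k i j != 0 -> (\sum_l A l) i j = A k i j.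
Proof.
move=> Akij; rewrite summxE (bigD1 k) //= big1 ?addr0 // => l neq_lk.
by apply: disjoint_support_entry Akij; rewrite eq_sym.
Qed.

Lemma binary_summx_disjoint :
  (forall k, binary_mx (A k)) -> binary_mx (\sum_k A k).
Proof.
move=> binA i j; have [/existsP[k Akij]|/existsPn A0] := boolP [exists k, A k i j != 0].
  by rewrite (summx_disjointE Akij); apply: binA.
by left; rewrite summxE big1 // => k _; apply/eqP/negbNE/A0.
Qed.

Lemma nnz_summx_disjoint : nnz (\sum_k A k) = (\sum_k nnz (A k))%N.
Proof.
under [RHS]eq_bigr => k _ do rewrite nnzE.
rewrite nnzE [RHS]exchange_big; apply: eq_bigr => i _.
rewrite [RHS]exchange_big; apply: eq_bigr => j _.
have [/existsP[k Akij]|/existsPn A0] := boolP [exists k, A k i j != 0].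
  rewrite (summx_disjointE Akij) (bigD1 k) //= Akij big1 // => l neq_lk.
  by rewrite (disjoint_support_entry _ Akij) ?eqxx // eq_sym.
by rewrite summxE !big1 ?eqxx // => k _; have /negbNE/eqP -> := A0 k; rewrite ?eqxx.
Qed.

End DisjointSupports.

Lemma sum_eqS_ord n x : (x <= n)%N -> (\sum_(i < n) (x == i.+1) = (x != 0))%N.
Proof.
case: x => [|x] x_le; first by rewrite big1.
rewrite (bigD1 (Ordinal x_le)) //= eqxx big1 // => i; rewrite eqSS -val_eqE /=.
by rewrite eq_sym => /negbTE ->.
Qed.

Section FunMatrix.

Variables (R : nzRingType) (n : nat).

(* The matrix of a partial map [g] of [{1, ..., n}] ([g x = 0] meaning
   undefined), indexed with the same shift by one as [Mphi]. *)
Definition fun_mx (g : nat -> nat) : 'M[R]_n :=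
  \matrix_(i < n, j < n) (g j.+1 == i.+1)%:R.

Lemma fun_mx_neq0 g i j : (fun_mx g i j != 0) = (g j.+1 == i.+1).
Proof. by rewrite mxE; case: (g j.+1 == i.+1); rewrite ?oner_eq0 ?eqxx. Qed.

Lemma binary_fun_mx g : binary_mx (fun_mx g).
Proof. by move=> i j; rewrite mxE; case: eqP; [right | left]. Qed.

Lemma fun_mx_id : fun_mx id = 1%:M.
Proof. by apply/matrixP=> i j; rewrite !mxE eqSS eq_sym. Qed.

Lemma mul_fun_mx g h : g 0%N = 0%N -> (forall j : 'I_n, h j.+1 <= n)%N ->
  fun_mx g *m fun_mx h = fun_mx (g \o h).
Proof.
move=> g0 h_le; apply/matrixP=> i j; rewrite !mxE /=.
case hj: (h j.+1) (h_le j) => [|l] l_lt.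
  by rewrite g0 big1 // => l _; rewrite !mxE hj mulr0.
rewrite (bigD1 (Ordinal l_lt)) //= !mxE hj eqxx mulr1 big1 ?addr0 // => l' l'_neq.
have /negbTE l_neq : l != l' by rewrite eq_sym.
by rewrite !mxE hj eqSS l_neq mulr0.
Qed.

Lemma fun_mx_exp g k : g 0%N = 0%N -> (forall x, g x <= n)%N ->
  fun_mx g ^+ k = fun_mx (iter k g).
Proof.
move=> g0 g_le; elim: k => [|k IHk]; first by rewrite expr0 fun_mx_id.
rewrite exprSr IHk -mulmxE mul_fun_mx ?iter_fix //.
by apply/matrixP=> i j; rewrite !mxE /= -iterS iterSr.
Qed.

Lemma nnz_fun_mx g : (forall j : 'I_n, g j.+1 <= n)%N ->
  nnz (fun_mx g) = #|[set j : 'I_n | g j.+1 != 0%N]|.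
Proof.
move=> g_le; rewrite nnzE exchange_big -sum1_card [RHS]big_mkcond /=.
apply: eq_bigr => j _; rewrite inE -[if _ then _ else _]/(nat_of_bool _).
by rewrite -(sum_eqS_ord (g_le j)); apply: eq_bigr => i _; rewrite fun_mx_neq0.
Qed.

End FunMatrix.

Arguments fun_mx {R n} g.

Lemma sum_subn_bin2 n : (\sum_(k < n) (n - k) = 'C(n.+1, 2))%N.
Proof.
rewrite -bin2_sum big_nat_rev /= big_nat_recr //= add0n subnn addn0.
by rewrite big_mkord; apply: eq_bigr => i _; rewrite subSS.
Qed.

Section LocalFunction.

Variables (phi : nat -> nat) (n : nat).
Local Notation f := (local_fun phi n).
Local Notation M := (Mphi phi n).

Lemma local_fun_le x : (f x <= n)%N.
Proof. by rewrite /local_fun; case: ifP => // /andP[_ /andP[]]. Qed.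

Lemma iter_local_fun0 k : iter k f 0 = 0%N.
Proof. exact: iter_fix. Qed.

Lemma iter_local_fun_le k x : (x <= n)%N -> (iter k f x <= n)%N.
Proof. by case: k => //= k _; apply: local_fun_le. Qed.

Lemma Mphi_exp k : M ^+ k = fun_mx (iter k f).
Proof. exact: fun_mx_exp local_fun_le. Qed.

Definition supp_iter k : {set 'I_n} := [set j : 'I_n | iter k f j.+1 != 0%N].

Lemma nnz_Mphi_exp k : nnz (M ^+ k) = #|supp_iter k|.
Proof. by rewrite Mphi_exp nnz_fun_mx // => j; apply: iter_local_fun_le. Qed.

Lemma supp_iter_succ_sub k : supp_iter k.+1 \subset supp_iter k.
Proof. by apply/subsetP=> j; rewrite !inE /=; apply: contra => /eqP ->. Qed.

Hypothesis phi_neq : forall x : nat, (1 <= x)%N -> phi x <> x.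
Hypothesis acyclic : no_cycle phi n.

Lemma local_fun_neq x : (0 < x)%N -> f x != x.
Proof.
rewrite /local_fun => x_gt0; case: ifP => _; first exact/eqP/phi_neq.
by rewrite eq_sym -lt0n.
Qed.

Lemma iter_local_fun_neq y a b : (y <= n)%N -> (a < b)%N ->
  iter a f y != 0%N -> iter b f y != iter a f y.
Proof.
move=> y_le lt_ab; set z := iter a f y => z_neq0.
have -> : iter b f y = iter (b - a) f z by rewrite /z -iterD subnK // ltnW.
have [ba_le1|ba_gt1] := leqP (b - a) 1.
  by rewrite (_ : (b - a = 1)%N); [apply: local_fun_neq; rewrite lt0n | lia].
apply/eqP=> cycle_z; apply: acyclic; exists (b - a)%N, z.
by rewrite ba_gt1 lt0n z_neq0 iter_local_fun_le.
Qed.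

Lemma iter_local_fun_inj y a b : (y <= n)%N ->
  iter a f y != 0%N -> iter a f y = iter b f y -> a = b.
Proof.
move=> y_le ya_neq0 eq_ab; case: (ltngtP a b) => // lt.
  by move: (iter_local_fun_neq y_le lt ya_neq0); rewrite eq_ab eqxx.
by move: (iter_local_fun_neq y_le lt); rewrite -eq_ab eqxx => /(_ ya_neq0).
Qed.

(* Otherwise the [n + 1] points [f^0 y, ..., f^n y] would be distinct
   elements of [{1, ..., n}]. *)
Lemma iter_local_fun_n y : (y <= n)%N -> iter n f y = 0%N.
Proof.
move=> y_le; apply/eqP/negPn/negP => yn_neq0.
have orbit_neq0 j : (j <= n)%N -> iter j f y != 0%N.
  move=> j_le; apply: contra yn_neq0 => /eqP yj0.
  by rewrite -[X in iter X _ _](subnK j_le) iterD yj0 iter_local_fun0.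
have orbit_uniq : uniq [seq iter j f y | j <- iota 0 n.+1].
  rewrite map_inj_in_uniq ?iota_uniq // => a b; rewrite !mem_iota /= => a_lt _.
  exact/iter_local_fun_inj/orbit_neq0.
have orbit_sub : {subset [seq iter j f y | j <- iota 0 n.+1] <= iota 1 n}.
  move=> z /mapP[j]; rewrite mem_iota /= => j_lt ->.
  by rewrite mem_iota lt0n orbit_neq0 // add1n ltnS iter_local_fun_le.
by have := uniq_leq_size orbit_uniq orbit_sub; rewrite size_map !size_iota ltnn.
Qed.

Lemma Mphi_exp_n : M ^+ n = 0.
Proof. by apply/matrixP=> i j; rewrite Mphi_exp !mxE iter_local_fun_n. Qed.

Lemma capnz_Mphi_exp k l : k != l -> capnz (M ^+ k) (M ^+ l) = 0%N.
Proof.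
move=> neq_kl; apply/eqP/capnz_eq0P=> i j; rewrite !Mphi_exp fun_mx_neq0 => /eqP ki.
apply/eqP; rewrite -[_ == 0]negbK fun_mx_neq0 -ki; apply: contra neq_kl => /eqP kl.
by apply/eqP/(iter_local_fun_inj (ltn_ord j)); rewrite ?ki ?kl.
Qed.

(* If the support of [f^k] is not shrunk by [f], it is [f]-invariant, hence
   empty since [f^n] vanishes. *)
Lemma supp_iter_stable_eq0 k :
  supp_iter k.+1 = supp_iter k -> supp_iter k = set0.
Proof.
move=> stable; apply/setP=> j; rewrite !inE; apply/negbTE/negP => kj_neq0.
have invariant y : (y <= n)%N -> iter k f y != 0%N -> iter k f (f y) != 0%N.
  case: y => [|y] y_le; first by rewrite iter_local_fun0 eqxx.
  by move/setP: stable => /(_ (Ordinal y_le)); rewrite !inE /= -iterS iterSr => ->.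
have orbit m : iter k f (iter m f j.+1) != 0%N.
  by elim: m => //= m IHm; apply: invariant; rewrite ?iter_local_fun_le.
by move: (orbit n); rewrite iter_local_fun_n ?iter_local_fun0.
Qed.

Lemma card_supp_iter k : (#|supp_iter k| <= n - k)%N.
Proof.
elim: k => [|k IHk]; first by rewrite subn0 (leq_trans (max_card _)) ?card_ord.
have [stable|shrinks] := eqVneq (supp_iter k.+1) (supp_iter k).
  by rewrite stable supp_iter_stable_eq0 // cards0.
have lt_card : (#|supp_iter k.+1| < #|supp_iter k|)%N.
  by apply: proper_card; rewrite properEneq shrinks supp_iter_succ_sub.
lia.
Qed.

End LocalFunction.

Theorem theorem1p5 (phi : nat -> nat) (n : nat) :
  phi 0%N = 0%N ->
  (forall x : nat, (1 <= x)%N -> phi x <> x) ->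
  (2 <= n)%N ->
  no_cycle phi n ->
  (* (1) *)
  (exists k : nat, (1 <= k <= n)%N /\ nilpotent_of_degree (Mphi phi n) k) /\
  (* (2) *)
  (forall k : nat, (1 <= k)%N -> binary_mx (Mphi phi n ^+ k)) /\
  (forall k : nat, (1 <= k <= n)%N -> (nnz (Mphi phi n ^+ k) <= n - k)%N) /\
  (forall k l : nat, (1 <= k)%N -> (1 <= l)%N -> k <> l ->
     capnz (Mphi phi n ^+ k) (Mphi phi n ^+ l) = 0%N) /\
  (* (3) *)
  Mhat phi n \in unitmx /\ \det (Mhat phi n) = 1 /\
  (* (4) *)
  binary_mx (invmx (Mhat phi n)) /\
  invmx (Mhat phi n) = \sum_(k < n) Mphi phi n ^+ k /\
  nnz (invmx (Mhat phi n)) = (n + \sum_(1 <= k < n) nnz (Mphi phi n ^+ k))%N /\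
  (nnz (invmx (Mhat phi n)) <= 'C(n.+1, 2))%N.
Proof.
move=> _ phi_neq n_ge2 acyclic; have n_gt0 : (0 < n)%N by apply: ltnW.
have Mn0 := Mphi_exp_n phi_neq acyclic.
have [unit_Mhat inv_Mhat] := invmx_1B_nilpotent Mn0.
have disj (k l : 'I_n) : k != l -> capnz (Mphi phi n ^+ k) (Mphi phi n ^+ l) = 0%N.
  exact: capnz_Mphi_exp.
have binM k : binary_mx (Mphi phi n ^+ k) by rewrite Mphi_exp; apply: binary_fun_mx.
split; first exact: nilpotent_degree_exists n_gt0 Mn0.
split; first by move=> k _; apply: binM.
split; first by move=> k _; rewrite nnz_Mphi_exp card_supp_iter.
split; first by move=> k l _ _ /eqP; apply: capnz_Mphi_exp.
split=> //; split; first exact: det_1B_nilpotent Mn0.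
split; first by rewrite inv_Mhat; apply: binary_summx_disjoint.
split=> //; rewrite inv_Mhat nnz_summx_disjoint //; split.
  rewrite -(big_mkord xpredT (fun k => nnz (Mphi phi n ^+ k))) (big_ltn n_gt0).
  rewrite nnz_Mphi_exp.
  by congr (_ + _)%N; rewrite -[RHS]card_ord; apply: eq_card => j; rewrite inE.
rewrite -sum_subn_bin2; apply: leq_sum => k _.
by rewrite nnz_Mphi_exp card_supp_iter.
Qed.
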